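(* Let $k\ge1$, $1\le r\le(2k+1)^2$, $\mathcal{B}=\mathcal{B}(2k+1,2k+1;r)$ and $G=D_4$. Then \[|\mathcal{O}_G(\mathcal{B})|=\frac18\left(\binom{(2k+1)^2}{r}+2\binom{k(k+1)}{\frac r4}+2\binom{k(k+1)}{\frac{r-1}{4}}+\binom{2k(k+1)}{\lfloor\frac r2\rfloor}+4\sum_{t=0}^{r}\binom{2k+1}{t}\binom{k(2k+1)}{\frac{r-t}{2}}\right).\]
   Context: $\mathcal{B}(2k+1,2k+1;r)$ is the set of all subsets of exactly $r$ cells (boards with $r$ blocked cells) of a $(2k+1)\times(2k+1)$ grid. The dihedral group $D_4$ of the 8 symmetries of the square (four rotations about the center and reflections across the horizontal midline, vertical midline and both diagonals) acts on boards; $\mathcal{O}_G(\mathcal{B})$ is the set of orbits (equivalence classes). Convention: a binomial coefficient $\binom{a}{b}$ is $0$ when $b$ is not a nonnegative integer or $b>a$. *)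

From mathcomp Require Import all_boot all_order all_algebra.
Set Implicit Arguments. Unset Strict Implicit. Unset Printing Implicit Defensive.

Definition cell (n : nat) := ('I_n * 'I_n)%type.

(* The 8 symmetries of the square (dihedral group D_4) acting on cells:
   0 identity, 1 rotation by 90, 2 rotation by 180, 3 rotation by 270,
   4 reflection across horizontal midline, 5 across vertical midline,
   6 across main diagonal, 7 across anti-diagonal. *)
Definition d4 (n : nat) (g : 'I_8) (c : cell n) : cell n :=
  let (i, j) := c in
  match val g with
  | 0 => (i, j)
  | 1 => (j, rev_ord i)
  | 2 => (rev_ord i, rev_ord j)
  | 3 => (rev_ord j, i)
  | 4 => (rev_ord i, j)
  | 5 => (i, rev_ord j)
  | 6 => (j, i)
  | _ => (rev_ord j, rev_ord i)
  end.

(* B(n,n;r): boards = sets of exactly r blocked cells. *)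
Definition boards (n r : nat) : {set {set cell n}} :=
  [set B : {set cell n} | #|B| == r].

Definition d4orbit (n : nat) (B : {set cell n}) : {set {set cell n}} :=
  [set X : {set cell n} | [exists g : 'I_8, X == d4 g @: B]].

Definition d4orbits (n r : nat) : {set {set {set cell n}}} :=
  [set d4orbit B | B in boards n r].

(* binomial a (num/den) with the convention: 0 if num/den is not an integer
   (num, den are natural numbers, den > 0 in uses). *)
Definition binq (a num den : nat) : nat :=
  if den %| num then 'C(a, num %/ den) else 0.

From mathcomp Require Import all_boot all_order all_algebra all_fingroup.
From mathcomp Require Import zify ring.
Set Implicit Arguments. Unset Strict Implicit. Unset Printing Implicit Defensive.

(* By the Cauchy-Frobenius lemma, 8 |O_G(B)| is the sum over the eight symmetries g of
   the number of r-boards fixed by g.  A board is fixed by a permutation s iff it is a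
   union of cycles of s.  When all non-trivial cycles of s have the same length m, such a
   board consists of t fixed cells and (r - t)/m of the m-cycles, so there are
   sum_t C(f, t) C(p, (r - t)/m) of them, f being the number of fixed cells and p the
   number of m-cycles.  On the (2k+1) x (2k+1) grid the identity fixes every cell; the
   quarter turns fix only the centre and have k(k+1) 4-cycles; the half turn fixes the
   centre and has 2k(k+1) 2-cycles; a reflection fixes the 2k+1 cells of its axis and
   has k(2k+1) 2-cycles. *)

Definition invariant_sets (T : finType) (s : {perm T}) (r : nat) : {set {set T}} :=
  [set B : {set T} | (#|B| == r) && (s @: B == B)].

Lemma card_draws_mul (T : finType) (P : {set T}) m d : 0 < m ->
  #|[set Q : {set T} | Q \subset P & m * #|Q| == d]| = binq #|P| d m.
Proof.
move=> m_gt0; rewrite /binq; case: ifP => [/dvdnP[q ->] | m_ndvd].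
  rewrite -cards_draws mulnK //; apply: eq_card => Q.
  by rewrite !inE mulnC eqn_pmul2r.
apply: eq_card0 => Q; rewrite !inE; apply/negbTE/andP => -[_ /eqP dE].
by rewrite -dE dvdn_mulr in m_ndvd.
Qed.

Lemma sum_binomial1 r (c : nat -> nat) : 0 < r ->
  \sum_(0 <= t < r.+1) 'C(1, t) * c t = c 0 + c 1.
Proof.
move=> r_gt0; rewrite big_ltn // big_ltn // big_nat big1 ?addn0 ?bin0 ?bin1 ?mul1n //.
by move=> t /andP[t_gt1 _]; rewrite bin_small.
Qed.

Lemma binq2_half p r : 0 < r -> binq p r 2 + binq p (r - 1) 2 = 'C(p, r./2).
Proof.
move=> r_gt0; rewrite /binq !dvdn2 oddB // -!divn2.
case: (boolP (odd r)) => /= r_odd; last by rewrite addn0.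
by congr 'C(_, _); have := modn2 r; rewrite r_odd; lia.
Qed.

Lemma card_sum_fibers (T : finType) (D : {set T}) (f : T -> nat) n :
  {in D, forall x, f x <= n} ->
  #|D| = \sum_(0 <= t < n.+1) #|[set x in D | f x == t]|.
Proof.
move=> f_le; rewrite big_mkord -sum1_card.
rewrite (partition_big (fun x => inord (f x) : 'I_n.+1) predT) //=.
apply: eq_bigr => t _; rewrite sum1dep_card; apply: eq_card => x.
rewrite !inE; case xD: (x \in D) => //=.
by rewrite -val_eqE /= inordK // ltnS f_le.
Qed.

Lemma porbit_fixed (T : finType) (s : {perm T}) x : s x = x -> porbit s x = [set x].
Proof.
move=> sx; apply/setP => y; rewrite inE.
apply/porbitP/eqP => [[i ->] | ->]; first exact: permX_fix.
by exists 0; rewrite expg0 perm1.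
Qed.

Lemma porbit_eq_mem (T : finType) (s : {perm T}) x y :
  y \in porbit s x -> porbit s y = porbit s x.
Proof. by rewrite -eq_porbit_mem => /eqP. Qed.

Lemma porbit_sub_invariant (T : finType) (s : {perm T}) (B : {set T}) x :
  s @: B = B -> x \in B -> porbit s x \subset B.
Proof.
move=> sB xB; apply/subsetP => _ /porbitP[i ->].
elim: i => [|i IHi]; first by rewrite expg0 perm1.
by rewrite expgSr permM -sB; apply: imset_f.
Qed.

Section InvariantSets.

Variables (T : finType) (s : {perm T}) (m : nat).
Hypothesis m_gt0 : 0 < m.
Hypothesis card_porbit_moved : forall x, s x != x -> #|porbit s x| = m.

Let fixpts := [set x | s x == x].
Let cycles := porbit s @: ~: fixpts.

Lemma cycles_moved O : O \in cycles -> O \subset ~: fixpts.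
Proof.
case/imsetP=> x; rewrite !inE => x_moved ->; apply/subsetP => y y_x.
rewrite !inE; apply: contra x_moved => /eqP sy.
by move: y_x; rewrite porbit_sym porbit_fixed // inE => /eqP ->; rewrite sy.
Qed.

Lemma trivIset_cycles : trivIset cycles.
Proof.
apply/trivIsetP => _ _ /imsetP[x _ ->] /imsetP[y _ ->] neq_xy.
rewrite -setI_eq0; apply/set0Pn => -[z]; rewrite inE => /andP[z_x z_y].
by move: neq_xy; rewrite -(porbit_eq_mem z_x) -(porbit_eq_mem z_y) eqxx.
Qed.

Lemma card_cycles O : O \in cycles -> #|O| = m.
Proof. by case/imsetP=> x; rewrite !inE => x_moved ->; apply: card_porbit_moved. Qed.

Section FixedCover.

Variables (A : {set T}) (Q : {set {set T}}).
Hypotheses (sAF : A \subset fixpts) (sQC : Q \subset cycles).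

Lemma card_fixed_cover : #|A :|: cover Q| = #|A| + m * #|Q|.
Proof.
have card_cover : #|cover Q| = m * #|Q|.
  rewrite -(eqP (trivIsetS sQC trivIset_cycles)) mulnC -sum_nat_const.
  by apply: eq_bigr => O QO; apply/card_cycles/(subsetP sQC).
have disjoint_AQ : A :&: cover Q = set0.
  apply/setP => x; rewrite !inE; apply/negbTE/andP => -[xA /bigcupP[O QO xO]].
  have := subsetP (cycles_moved (subsetP sQC _ QO)) _ xO.
  by rewrite inE (subsetP sAF _ xA).
by rewrite cardsU disjoint_AQ cards0 subn0 card_cover.
Qed.

Lemma fixed_cover_invariant : s @: (A :|: cover Q) = A :|: cover Q.
Proof.
apply/eqP; rewrite eqEcard card_imset ?leqnn ?andbT; last exact: perm_inj.
apply/subsetP => _ /imsetP[x + ->]; rewrite !inE => /orP[xA | /bigcupP[O QO xO]].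
  by have := subsetP sAF _ xA; rewrite inE => /eqP ->; rewrite xA.
apply/orP; right; apply/bigcupP; exists O => //.
case/imsetP: (subsetP sQC _ QO) => y _ Oy; rewrite Oy in xO *.
by rewrite -(porbit_eq_mem xO) -[s x]/((s ^+ 1)%g x) mem_porbit.
Qed.

Lemma fixed_cover_fixpts : (A :|: cover Q) :&: fixpts = A.
Proof.
apply/setP => x; rewrite !inE.
case xA: (x \in A); first by have := subsetP sAF _ xA; rewrite inE.
apply/negbTE/andP => -[/bigcupP[O QO xO] x_fixed].
by have := subsetP (cycles_moved (subsetP sQC _ QO)) _ xO; rewrite !inE x_fixed.
Qed.

Lemma fixed_cover_cycles : [set O in cycles | O \subset A :|: cover Q] = Q.
Proof.
apply/setP => O; rewrite !inE; apply/andP/idP => [[cO sO] | QO]; last first.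
  split; first exact: subsetP sQC _ QO.
  by apply/subsetP => x xO; rewrite inE; apply/orP; right; apply/bigcupP; exists O.
case/imsetP: (cO) => x x_moved Ox.
have := subsetP sO x; rewrite Ox porbit_id inE => /(_ isT) /orP[xA | /bigcupP[O' QO' xO']].
  by have := subsetP sAF _ xA; move: x_moved; rewrite !inE => /negP.
case/imsetP: (subsetP sQC _ QO') => y _ O'y.
by move: xO'; rewrite O'y => /porbit_eq_mem ->; rewrite -O'y.
Qed.

End FixedCover.

Lemma invariant_decomp (B : {set T}) : s @: B = B ->
  B = (B :&: fixpts) :|: cover [set O in cycles | O \subset B].
Proof.
move=> sB; apply/setP => x; rewrite !inE.
apply/idP/idP => [xB | /orP[/andP[] // | /bigcupP[O]]]; last first.
  by rewrite inE => /andP[_ /subsetP]; apply.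
rewrite xB /=; case: (boolP (s x == x)) => //= x_moved.
apply/bigcupP; exists (porbit s x); last exact: porbit_id.
by rewrite inE imset_f ?inE // porbit_sub_invariant.
Qed.

Let pairs r := [set p : {set T} * {set {set T}} |
  [&& p.1 \subset fixpts, p.2 \subset cycles & #|p.1| + m * #|p.2| == r]].

Lemma card_invariant_sets_pairs r : #|invariant_sets s r| = #|pairs r|.
Proof.
have -> : invariant_sets s r = [set p.1 :|: cover p.2 | p in pairs r].
  apply/setP => B; rewrite inE; apply/andP/imsetP => [[/eqP cardB /eqP sB] | [[A Q]]].
    have sQC : [set O in cycles | O \subset B] \subset cycles.
      by apply/subsetP => O; rewrite inE => /andP[].
    exists (B :&: fixpts, [set O in cycles | O \subset B]); last exact: invariant_decomp.
    rewrite inE /= subsetIr sQC -card_fixed_cover ?subsetIr //.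
    by rewrite -invariant_decomp // cardB eqxx.
  rewrite inE /= => /and3P[sAF sQC /eqP cardAQ] ->.
  by rewrite card_fixed_cover // cardAQ fixed_cover_invariant.
apply: card_in_imset => -[A Q] [A' Q'].
rewrite !inE /= => /and3P[sAF sQC _] /and3P[sAF' sQC' _] eqAQ.
have /(congr1 (fun X : {set T} => X :&: fixpts)) := eqAQ.
rewrite /= !fixed_cover_fixpts // => ->.
have /(congr1 (fun X : {set T} => [set O in cycles | O \subset X])) := eqAQ.
by rewrite /= !fixed_cover_cycles // => ->.
Qed.

Lemma card_pairs r :
  #|pairs r| = \sum_(0 <= t < r.+1) 'C(#|fixpts|, t) * binq #|cycles| (r - t) m.
Proof.
rewrite (@card_sum_fibers _ _ (fun p : {set T} * {set {set T}} => #|p.1|) r); last first.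
  by move=> p; rewrite inE => /and3P[_ _ /eqP <-]; apply: leq_addr.
rewrite !big_nat; apply: eq_bigr => t /andP[_ le_tr].
rewrite -cards_draws -card_draws_mul // -cardsX; apply: eq_card => -[A Q].
rewrite !inE /=; case: (A \subset fixpts) (Q \subset cycles) => [] []; rewrite /= ?andbF //.
apply/andP/andP => [[/eqP cardAQ /eqP cardA] | [/eqP cardA /eqP cardQ]].
  by rewrite -cardAQ cardA addKn eqxx.
by rewrite cardA cardQ subnKC ?eqxx.
Qed.

Lemma card_fixpts_cycles : #|T| = #|fixpts| + m * #|cycles|.
Proof.
rewrite -card_fixed_cover ?subxx //; apply: eq_card => x; rewrite !inE.
case: (boolP (s x == x)) => //= x_moved; symmetry.
by apply/bigcupP; exists (porbit s x); rewrite ?porbit_id ?imset_f ?inE.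
Qed.

Lemma card_invariant_sets f p r : #|fixpts| = f -> #|T| = f + m * p ->
  #|invariant_sets s r| = \sum_(0 <= t < r.+1) 'C(f, t) * binq p (r - t) m.
Proof.
move=> <-; rewrite card_fixpts_cycles => /eqP; rewrite eqn_add2l eqn_pmul2l // => /eqP <-.
by rewrite card_invariant_sets_pairs card_pairs.
Qed.

End InvariantSets.

Lemma card_porbit_iter (T : finType) (s : {perm T}) x m : 0 < m -> iter m s x = x ->
  (forall i, 0 < i < m -> iter i s x != x) -> #|porbit s x| = m.
Proof.
move=> m_gt0 sm_x sNi_x.
have ord_gt0 : 0 < #|porbit s x| by rewrite lt0n card_porbit_neq0.
case: (ltngtP #|porbit s x| m) => // [lt_ord_m | lt_m_ord].
  by move: (sNi_x #|porbit s x|); rewrite ord_gt0 lt_ord_m iter_porbit eqxx => /(_ isT).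
have : nth x (traject s x #|porbit s x|) 0 == nth x (traject s x #|porbit s x|) m.
  by rewrite !nth_traject // sm_x.
rewrite nth_uniq ?size_traject ?uniq_traject_porbit //.
by case: m m_gt0 {sm_x sNi_x lt_m_ord}.
Qed.

Lemma card_porbit_involutive (T : finType) (s : {perm T}) : involutive s ->
  forall x, s x != x -> #|porbit s x| = 2.
Proof.
move=> sK x sx; apply: card_porbit_iter => //=.
by case=> [|[|]].
Qed.

Ltac case_sym g := case: g => [[|[|[|[|[|[|[|[|?]]]]]]]] ?] //.

Ltac exists_sym tac :=
  first [ exists (@Ordinal 8 0 isT); tac | exists (@Ordinal 8 1 isT); tac
        | exists (@Ordinal 8 2 isT); tac | exists (@Ordinal 8 3 isT); tac
        | exists (@Ordinal 8 4 isT); tac | exists (@Ordinal 8 5 isT); tac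
        | exists (@Ordinal 8 6 isT); tac | exists (@Ordinal 8 7 isT); tac ].

Lemma d4_can n g : exists h, cancel (@d4 n g) (@d4 n h).
Proof. by case_sym g; exists_sym ltac:(by case=> i j /=; rewrite ?rev_ordK). Qed.

Lemma d4_comp n a b : exists c, forall x, d4 b (d4 a x) = @d4 n c x.
Proof.
by case_sym a; case_sym b; exists_sym ltac:(by case=> i j /=; rewrite ?rev_ordK).
Qed.

Lemma d4_inj n g : injective (@d4 n g).
Proof. by have [h gK] := d4_can n g; apply: can_inj gK. Qed.

Definition d4perm n g : {perm cell n} := perm (@d4_inj n g).

Lemma d4permE n g x : d4perm n g x = d4 g x.
Proof. exact: permE. Qed.

Lemma group_set_d4 n : group_set [set d4perm n g | g : 'I_8].
Proof.
apply/andP; split.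
  by apply/imsetP; exists ord0 => //; apply/permP => -[i j]; rewrite d4permE perm1.
apply/subsetP => _ /mulsgP[_ _ /imsetP[a _ ->] /imsetP[b _ ->] ->].
have [c abc] := d4_comp n a b; apply/imsetP; exists c => //.
by apply/permP => x; rewrite permM !d4permE abc.
Qed.

Definition d4_group n : {group {perm cell n}} := Group (group_set_d4 n).

Lemma d4perm_inj n : 1 < n -> injective (d4perm n).
Proof.
move=> n_gt1 a b eq_ab.
(* The images of the cells (0, 1) and (0, 0) already tell the eight symmetries apart. *)
have n_gt0 : 0 < n by apply: ltnW.
pose c01 : cell n := (Ordinal n_gt0, Ordinal n_gt1).
pose c00 : cell n := (Ordinal n_gt0, Ordinal n_gt0).
have eq_at (c : cell n) : (val (d4 a c).1, val (d4 a c).2) = (val (d4 b c).1, val (d4 b c).2).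
  by rewrite -[d4 a c]d4permE -[d4 b c]d4permE eq_ab.
move: (eq_at c01) (eq_at c00); rewrite /c01 /c00 {eq_ab eq_at}.
case_sym a; case_sym b; first [ by move=> _ _; apply/val_inj
  | move=> /= /pair_equal_spec[? ?] /pair_equal_spec[? ?]; lia ].
Qed.

Lemma orbit_d4_group n (B : {set cell n}) : orbit 'P^* (d4_group n) B = d4orbit B.
Proof.
have image_d4 g : d4perm n g @: B = d4 g @: B.
  by apply: eq_imset => x; rewrite d4permE.
apply/setP => X; rewrite inE.
apply/imsetP/existsP => [[_ /imsetP[g _ ->] ->] | [g /eqP ->]].
  by exists g; rewrite /= /setact image_d4.
by exists (d4perm n g); rewrite ?imset_f //= /setact image_d4.
Qed.

Lemma d4_burnside n r : 1 < n ->
  #|d4orbits n r| * 8 = \sum_(g < 8) #|invariant_sets (d4perm n g) r|.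
Proof.
move=> n_gt1.
have acts_boards : [acts d4_group n, on boards n r | 'P^*].
  apply/actsP => a _ B; rewrite !inE /= card_imset //; exact: perm_inj.
have card_d4 : #|d4_group n| = 8 by rewrite card_imset ?card_ord //; apply: d4perm_inj.
have orbits_d4 : orbit 'P^* (d4_group n) @: boards n r = d4orbits n r.
  by apply: eq_imset => B; rewrite orbit_d4_group.
rewrite -orbits_d4 -[in LHS]card_d4 -(Frobenius_Cauchy acts_boards) big_imset /=.
  2: by move=> a b _ _; apply: d4perm_inj.
apply: eq_bigr => g _; apply: eq_card => B.
by rewrite !inE sub1set inE andbC.
Qed.

Ltac cell_eqE := rewrite ?d4permE /= ?xpair_eqE -?val_eqE /=.

Lemma card_porbit_quarter_turn n g : val g \in [:: 1; 3] ->
  forall x, d4perm n g x != x -> #|porbit (d4perm n g) x| = 4.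
Proof.
move=> g_rot [i j]; have := ltn_ord i; have := ltn_ord j.
move: g_rot; case_sym g => _ lt_j lt_i; cell_eqE => moved.
all: apply: card_porbit_iter => //=; first by cell_eqE; rewrite !rev_ordK.
all: by case=> [|[|[|[|]]]] //= _; cell_eqE; lia.
Qed.

Lemma d4_involutive n g : val g \in [:: 2; 4; 5; 6; 7] -> involutive (d4perm n g).
Proof. by case_sym g => _ [i j]; rewrite !d4permE /= ?rev_ordK. Qed.

Lemma card_graph n (f : 'I_n -> 'I_n) : #|[set x : cell n | x.2 == f x.1]| = n.
Proof.
have graph_inj : injective (fun i => (i, f i)) by move=> i i' [].
rewrite -[RHS]card_ord -(card_imset _ graph_inj); apply: eq_card => -[i j].
by rewrite inE /=; apply/eqP/imsetP => [-> | [i' _ [-> ->]]] //; exists i.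
Qed.

Lemma card_graph_transposed n (f : 'I_n -> 'I_n) :
  #|[set x : cell n | x.1 == f x.2]| = n.
Proof.
have graph_inj : injective (fun j => (f j, j)) by move=> j j' [].
rewrite -[RHS]card_ord -(card_imset _ graph_inj); apply: eq_card => -[i j].
by rewrite inE /=; apply/eqP/imsetP => [-> | [j' _ [-> ->]]] //; exists j.
Qed.

Lemma mid_subproof k : k < 2 * k + 1.
Proof. lia. Qed.

Definition mid k : 'I_(2 * k + 1) := Ordinal (mid_subproof k).

Lemma d4_rotation_fixpts k g : val g \in [:: 1; 2; 3] ->
  [set x : cell (2 * k + 1) | d4perm _ g x == x] = [set (mid k, mid k)].
Proof.
case_sym g => _; apply/setP => -[i j]; rewrite !inE; cell_eqE;
  have := ltn_ord i; have := ltn_ord j; lia.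
Qed.

Lemma card_d4_reflection_fixpts k g : val g \in [:: 4; 5; 6; 7] ->
  #|[set x : cell (2 * k + 1) | d4perm _ g x == x]| = 2 * k + 1.
Proof.
case_sym g => _; [ rewrite -[RHS](card_graph_transposed (fun=> mid k))
  | rewrite -[RHS](card_graph (fun=> mid k))
  | rewrite -[RHS](card_graph id)
  | rewrite -[RHS](card_graph (@rev_ord _)) ].
all: apply: eq_card => -[i j]; rewrite !inE; cell_eqE;
  have := ltn_ord i; have := ltn_ord j; lia.
Qed.

Lemma card_invariant_identity n r g : val g = 0 ->
  #|invariant_sets (d4perm n g) r| = 'C(n ^ 2, r).
Proof.
move=> g0; have -> : d4perm n g = 1%g.
  by apply/permP => -[i j]; rewrite d4permE perm1; move: g0; case_sym g.
have <- : #|{: cell n}| = n ^ 2 by rewrite card_prod card_ord mulnn.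
rewrite -card_draws; apply: eq_card => B.
by rewrite !inE (eq_imset _ (@perm1 _)) imset_id eqxx andbT.
Qed.

Lemma card_invariant_quarter_turn k r g : val g \in [:: 1; 3] -> 0 < r ->
  #|invariant_sets (d4perm (2 * k + 1) g) r| =
  binq (k * (k + 1)) r 4 + binq (k * (k + 1)) (r - 1) 4.
Proof.
move=> g_rot r_gt0.
have fixpts1 : #|[set x : cell (2 * k + 1) | d4perm _ g x == x]| = 1.
  by rewrite d4_rotation_fixpts ?cards1 //; move: g_rot; case_sym g.
rewrite (card_invariant_sets (p := k * (k + 1)) _
    (card_porbit_quarter_turn g_rot) r fixpts1) //.
  by rewrite sum_binomial1 // subn0.
by rewrite card_prod card_ord; nia.
Qed.

Lemma card_invariant_half_turn k r g : val g = 2 -> 0 < r ->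
  #|invariant_sets (d4perm (2 * k + 1) g) r| = 'C(2 * k * (k + 1), r./2).
Proof.
move=> g2 r_gt0.
have g_inv : val g \in [:: 2; 4; 5; 6; 7] by rewrite g2.
have fixpts1 : #|[set x : cell (2 * k + 1) | d4perm _ g x == x]| = 1.
  by rewrite d4_rotation_fixpts ?cards1 ?g2.
rewrite (card_invariant_sets (p := 2 * k * (k + 1)) _
    (card_porbit_involutive (d4_involutive g_inv)) r fixpts1) //.
  by rewrite sum_binomial1 // subn0 binq2_half.
by rewrite card_prod card_ord; nia.
Qed.

Lemma card_invariant_reflection k r g : val g \in [:: 4; 5; 6; 7] ->
  #|invariant_sets (d4perm (2 * k + 1) g) r| =
  \sum_(0 <= t < r.+1) 'C(2 * k + 1, t) * binq (k * (2 * k + 1)) (r - t) 2.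
Proof.
move=> g_refl.
have g_inv : val g \in [:: 2; 4; 5; 6; 7] by move: g_refl; case_sym g.
rewrite (card_invariant_sets (p := k * (2 * k + 1)) _
  (card_porbit_involutive (d4_involutive g_inv)) r (card_d4_reflection_fixpts k g_refl)) //.
by rewrite card_prod card_ord; nia.
Qed.

Unset Implicit Arguments.
Import GRing.Theory Num.Theory.
Local Open Scope ring_scope.

Theorem proposition5p2 (k r : nat) (hk : (1 <= k)%N)
  (hr1 : (1 <= r)%N) (hr2 : (r <= (2 * k + 1) ^ 2)%N) :
  (#|d4orbits (2 * k + 1) r|)%:R =
  (1 / 8 : rat) *
  (('C((2 * k + 1) ^ 2, r))%:R
   + 2 * (binq (k * (k + 1)) r 4)%:R
   + 2 * (binq (k * (k + 1)) (r - 1) 4)%:R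
   + ('C(2 * k * (k + 1), r./2))%:R
   + 4 * (\sum_(0 <= t < r.+1) 'C(2 * k + 1, t) * binq (k * (2 * k + 1)) (r - t) 2)%N%:R).
Proof.
have n_gt1 : (1 < 2 * k + 1)%N by lia.
have burnside := d4_burnside r n_gt1.
rewrite !big_ord_recl big_ord0 card_invariant_identity // card_invariant_quarter_turn //
  card_invariant_half_turn // card_invariant_quarter_turn //
  !card_invariant_reflection // in burnside.
have -> : (#|d4orbits (2 * k + 1) r|)%:R = (#|d4orbits (2 * k + 1) r| * 8)%N%:R / 8 :> rat.
  by rewrite natrM; field.
by rewrite burnside !natrD; field.
Qed.
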